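(* Let $K$ be an alphabet space and $\sigma:K\to K^+$ a generalized substitution on $K$. Then the induced map $\sigma:K^{\mathbb Z}\to K^{\mathbb Z}$ is continuous.
   Context: An alphabet space is a compact zero-dimensional metric space $K$ with at least two points; $K^+$ is the set of nonempty finite words over $K$, and $K^{\mathbb Z}$ carries the product topology. A generalized substitution is a map $\sigma:K\to K^+$ such that $a\mapsto|\sigma(a)|$ is continuous and, for each $j$, $a\mapsto$ ($j$-th letter of $\sigma(a)$) is continuous on $\{a:|\sigma(a)|\ge j\}$. Its extension to $K^{\mathbb Z}$ is $\sigma(\ldots x_{-2}x_{-1}.x_0x_1\ldots)=\ldots\sigma(x_{-2})\sigma(x_{-1}).\sigma(x_0)\sigma(x_1)\ldots$, with $\sigma(x_0)$ starting at coordinate $0$. *)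

From HB Require Import structures.
From mathcomp Require Import all_boot all_order all_algebra.
From mathcomp Require Import all_classical all_reals all_analysis.
Set Implicit Arguments. Unset Strict Implicit. Unset Printing Implicit Defensive.
Import Order.TTheory GRing.Theory Num.Theory.
Local Open Scope classical_set_scope.
Local Open Scope ring_scope.

Definition alphabet_space (R : realType) (K : metricType R) : Prop :=
  [/\ compact [set: K], zero_dimensional K & exists a b : K, a != b].

(* Words in K^+ are represented as elements of seq K; nonemptiness is part
   of the definition of a generalized substitution.  Letters are indexed
   from 0: "j-th letter" (1-based) is [nth _ (sigma a) (j-1)], defined on
   [j-1 < size (sigma a)], i.e. |sigma(a)| >= j.  nat carries the discrete
   topology. *)
Definition gen_subst (R : realType) (K : metricType R) (sigma : K -> seq K)
    : Prop :=
  [/\ forall a, (0 < size (sigma a))%N,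
      continuous (fun a => size (sigma a))
    & forall j : nat,
        {within [set a | (j < size (sigma a))%N],
          continuous (fun a => nth a (sigma a) j)}].

(* The extension of sigma to K^Z:
   ... sigma(x_{-2}) sigma(x_{-1}) . sigma(x_0) sigma(x_1) ...
   Coordinate m >= 0 is letter m of sigma(x_0) sigma(x_1) ... ;
   coordinate -(m+1) (= Negz m) is letter m of the right-to-left reading
   rev(sigma(x_{-1})) rev(sigma(x_{-2})) ... .  Since all words are
   nonempty, the first m+1 words suffice; the default value is never used. *)
Definition subst_ext (K : Type) (sigma : K -> seq K) (x : int -> K) : int -> K :=
  fun n => match n with
  | Posz m => nth (x 0) (flatten [seq sigma (x (Posz i)) | i <- iota 0 m.+1]) m
  | Negz m => nth (x 0) (flatten [seq rev (sigma (x (Negz i))) | i <- iota 0 m.+1]) m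
  end.

From HB Require Import structures.
From mathcomp Require Import all_boot all_order all_algebra.
From mathcomp Require Import all_classical all_reals all_analysis.
Local Open Scope classical_set_scope.

(* Near a point x the
   lengths |sigma(x_i)| are locally constant (a continuous map into the
   discrete space nat), so for y close to x the n-th coordinate of sigma(y) is
   read off as the same fixed letter j of the same word sigma(y_i) as for x; and
   y |-> (letter j of sigma(y_i)) is continuous at x because the domain
   [j < |sigma a|] of letter j is open. *)

Lemma size_flatten_ge (T : Type) (ss : seq (seq T)) :
  all (fun s => (0 < size s)%N) ss -> (size ss <= size (flatten ss))%N.
Proof.
elim: ss => [//|s ss IHss] /= /andP[s_gt0 ss_gt0].
by rewrite size_cat -add1n leq_add ?IHss.
Qed.

Section WordValuedMaps.
Context {X K : topologicalType}.

(* Continuity for maps into K^+ = \bigsqcup_n K^n: locally constant length and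
   continuous letters. *)
Definition word_continuous_at (w : X -> seq K) (x : X) : Prop :=
  (\forall y \near x, size (w y) = size (w x)) /\
  forall (d : K) (j : nat), (j < size (w x))%N ->
    (fun y => nth d (w y) j) @ x --> nth d (w x) j.

Lemma near_continuous_discrete (Y : discreteTopologicalType) (f : X -> Y)
    (x : X) :
  {for x, continuous f} -> \forall y \near x, f y = f x.
Proof. by move=> fx; exact: fx _ (discrete_set1 (f x)). Qed.

Lemma word_continuous_nil (x : X) : word_continuous_at (fun=> [::]) x.
Proof. by split => //; exact: nearW. Qed.

Lemma word_continuous_cat (w1 w2 : X -> seq K) (x : X) :
  word_continuous_at w1 x -> word_continuous_at w2 x ->
  word_continuous_at (fun y => w1 y ++ w2 y) x.
Proof.
move=> [sz1 nth1] [sz2 nth2]; split.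
  by apply: filterS2 sz1 sz2 => y s1 s2; rewrite !size_cat s1 s2.
move=> d j; rewrite size_cat nth_cat => jlt.
have eqw : {near x, (fun y => if (j < size (w1 x))%N then nth d (w1 y) j
    else nth d (w2 y) (j - size (w1 x))) =1 (fun y => nth d (w1 y ++ w2 y) j)}.
  by apply: filterS sz1 => y s1; rewrite nth_cat s1.
apply: cvg_trans (near_eq_cvg eqw) _.
case: ifP => j1; first exact: nth1.
by apply: nth2; rewrite ltn_subLR // leqNgt j1.
Qed.

Lemma word_continuous_flatten (I : Type) (F : I -> X -> seq K) (l : seq I)
    (x : X) :
  (forall i, word_continuous_at (F i) x) ->
  word_continuous_at (fun y => flatten [seq F i y | i <- l]) x.
Proof.
move=> Fx; elim: l => [|i l IHl]; first exact: word_continuous_nil.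
exact: word_continuous_cat.
Qed.

Lemma word_continuous_rev (w : X -> seq K) (x : X) :
  word_continuous_at w x -> word_continuous_at (fun y => rev (w y)) x.
Proof.
move=> [sz nthw]; split.
  by apply: filterS sz => y s; rewrite !size_rev s.
move=> d j; rewrite size_rev => jlt; rewrite nth_rev //.
have eqw : {near x, (fun y => nth d (w y) (size (w x) - j.+1)) =1
    (fun y => nth d (rev (w y)) j)}.
  by apply: filterS sz => y s; rewrite nth_rev s.
apply: cvg_trans (near_eq_cvg eqw) _.
by apply: nthw; rewrite subnSK // leq_subr.
Qed.

Lemma word_continuous_nth (w : X -> seq K) (x : X) (d : X -> K) (m : nat) :
  word_continuous_at w x -> (m < size (w x))%N ->
  (fun y => nth (d y) (w y) m) @ x --> nth (d x) (w x) m.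
Proof.
move=> [sz nthw] mlt.
have eqw : {near x, (fun y => nth (d x) (w y) m) =1
    (fun y => nth (d y) (w y) m)}.
  by apply: filterS sz => y s; apply: set_nth_default; rewrite s.
exact: cvg_trans (near_eq_cvg eqw) (nthw _ _ mlt).
Qed.

Lemma word_continuous_nth_flatten (F : nat -> X -> seq K) (x : X) (d : X -> K)
    (m : nat) :
  (forall i, word_continuous_at (F i) x) -> (forall i, (0 < size (F i x))%N) ->
  (fun y => nth (d y) (flatten [seq F i y | i <- iota 0 m.+1]) m) @ x -->
    nth (d x) (flatten [seq F i x | i <- iota 0 m.+1]) m.
Proof.
move=> Fx F_gt0; apply: word_continuous_nth.
  exact: word_continuous_flatten.
have := @size_flatten_ge _ [seq F i x | i <- iota 0 m.+1].
by rewrite size_map size_iota; apply; apply/allP => s /mapP[i _ ->].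
Qed.

End WordValuedMaps.

Lemma ptws_continuous_at (X : topologicalType) (I : Type) (T : topologicalType)
    (h : X -> {ptws I -> T}) (x : X) :
  (forall i, {for x, continuous (fun y => h y i)}) -> {for x, continuous h}.
Proof.
move=> hcont; apply/cvg_sup => i U [_ /= [[W oW <-]]] /= Wfi /filterS; apply.
exact/hcont/open_nbhs_nbhs.
Qed.

Section GeneralizedSubstitution.
Context {R : realType} {K : metricType R} (sigma : K -> seq K).
Hypothesis sigma_gen : gen_subst sigma.

Lemma gen_subst_letter_continuous (j : nat) (a : K) :
  (j < size (sigma a))%N -> {for a, continuous (fun b => nth b (sigma b) j)}.
Proof.
case: sigma_gen => _ size_cont letter_cont ja.
have jopen : open [set b : K | (j < size (sigma b))%N].
  exact: (continuousP _).1 size_cont [set k | (j < k)%N] (discrete_open _).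
move: (letter_cont j); rewrite (continuous_open_subspace _ jopen).
by apply; rewrite inE.
Qed.

Lemma gen_subst_word_continuous (X : topologicalType) (f : X -> K) (x : X) :
  {for x, continuous f} -> word_continuous_at (fun y => sigma (f y)) x.
Proof.
case: sigma_gen => _ size_cont _ fx.
have sz : \forall y \near x, size (sigma (f y)) = size (sigma (f x)).
  exact: near_continuous_discrete (continuous_comp fx (size_cont _)).
split=> // d j jlt.
have eqw : {near x, (fun y => nth (f y) (sigma (f y)) j) =1
    (fun y => nth d (sigma (f y)) j)}.
  by apply: filterS sz => y s; apply: set_nth_default; rewrite s.
rewrite (set_nth_default (f x)) //.
apply: cvg_trans (near_eq_cvg eqw) _.
exact: continuous_comp fx (gen_subst_letter_continuous _ _ jlt).
Qed.

End GeneralizedSubstitution.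

Theorem mainTheorem16 (R : realType) (K : metricType R) (sigma : K -> seq K) :
  alphabet_space K -> gen_subst sigma ->
  continuous (subst_ext sigma : {ptws int -> K} -> {ptws int -> K}).
Proof.
move=> _ sigma_gen x; apply: ptws_continuous_at => -[m|m]; rewrite /subst_ext.
- apply: (word_continuous_nth_flatten
    (fun i (y : {ptws int -> K}) => sigma (y (Posz i))) _ (fun y => y 0%R))
    => i.
    exact/gen_subst_word_continuous/proj_continuous.
  by case: sigma_gen.
- apply: (word_continuous_nth_flatten
    (fun i (y : {ptws int -> K}) => rev (sigma (y (Negz i)))) _
    (fun y => y 0%R)) => i.
    exact/word_continuous_rev/gen_subst_word_continuous/proj_continuous.
  by case: sigma_gen => pos _ _; rewrite size_rev.
Qed.
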